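(* For every positive integer $N$ and all $w_1,w_2\in\mathcal{H}^1$, $\mathsf{F}_N(w_1;t)\,\mathsf{F}_N(w_2;t)=\mathsf{F}_N(w_1\,\overline{*}\,w_2;t)$ in $\mathbb{Q}(t)$.
   Context: $t$ is an indeterminate, $[n]=\{1,\dots,n\}$. An index is a tuple of positive integers. For an index $\boldsymbol{k}=(k_1,\dots,k_r)$ and $A\subset[r]$ let $\overline{S}_{r,N}(A)=\{(n_1,\dots,n_r)\in[N-1]^r: n_{i-1}\le n_i\text{ if }1<i\in[r]\setminus A,\ n_{i-1}<n_i\text{ if }1<i\in A\}$, and \[ F_N(\boldsymbol{k};t)=\sum_{A\subset[r]}(-1)^{\#A}\sum_{(n_1,\dots,n_r)\in\overline{S}_{r,N}(A)}\Bigl(\prod_{i\in A}\frac1{(N-n_i+t)^{k_i}}\Bigr)\Bigl(\prod_{i\in[r]\setminus A}\frac1{n_i^{k_i}}\Bigr). \] $\mathcal{H}=\mathbb{Q}\langle x,y\rangle$, $\mathcal{H}^1=\mathbb{Q}+y\mathcal{H}$, $e_k=yx^{k-1}$; $\mathsf{F}_N\colon\mathcal{H}^1\to\mathbb{Q}(t)$ is $\mathbb{Q}$-linear with $\mathsf{F}_N(1)=1$ and $\mathsf{F}_N(e_{k_1}\cdots e_{k_r})=F_N(\boldsymbol{k};t)$. The star-harmonic product $\overline{*}$ on $\mathcal{H}^1$ is $\mathbb{Q}$-bilinear with $w\,\overline{*}\,1=1\,\overline{*}\,w=w$ and $w_1e_{k_1}\,\overline{*}\,w_2e_{k_2}=(w_1\,\overline{*}\,w_2e_{k_2})e_{k_1}+(w_1e_{k_1}\,\overline{*}\,w_2)e_{k_2}-(w_1\,\overline{*}\,w_2)e_{k_1+k_2}$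 for words $w_1,w_2\in\mathcal{H}^1$. *)

From HB Require Import structures.
From mathcomp Require Import all_boot all_order all_algebra fraction.
Set Implicit Arguments. Unset Strict Implicit. Unset Printing Implicit Defensive.
Import Order.TTheory GRing.Theory Num.Theory.
Local Open Scope ring_scope.

Definition QT := {fraction {poly rat}}.
Definition tt_ : QT := FracField.tofrac (R:={poly rat}) 'X.
Definition cst (c : rat) : QT := FracField.tofrac (R:={poly rat}) c%:P.

(* An index k = (k_1,...,k_r) is a sequence of naturals (required positive);
   the word e_{k_1}...e_{k_r} of H^1 is identified with its index. *)
Definition index := seq nat.

(* \overline{S}_{r,N}(A), with n_i in [N-1] encoded as n i : 'I_N, n i > 0;
   0-based positions: i and j = i+1 consecutive. *)
Definition Sbar (N r : nat) (A : {set 'I_r}) (n : {ffun 'I_r -> 'I_N}) : bool :=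
  [forall i : 'I_r, 0 < (n i : nat)]%N &&
  [forall i : 'I_r, forall j : 'I_r,
     (j == i.+1 :> nat) ==> (if j \in A then (n i < n j)%N else (n i <= n j)%N)].

Definition FN (N : nat) (k : index) : QT :=
  let r := size k in
  \sum_(A : {set 'I_r})
    (-1) ^+ #|A| *
    \sum_(n : {ffun 'I_r -> 'I_N} | Sbar A n)
       ((\prod_(i in A) (((N - n i)%:R + tt_) ^+ nth 0%N k i)^-1) *
        (\prod_(i : 'I_r | i \notin A) (((n i : nat)%:R : QT) ^+ nth 0%N k i)^-1)).

(* Elements of H^1 as finite formal Q-linear combinations of words (indices). *)
Definition H1 := seq (rat * index).

Definition admissible (w : H1) : bool :=
  all (fun p => all (fun k => 0 < k)%N p.2) w.

Definition FNlin (N : nat) (w : H1) : QT :=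
  \sum_(p <- w) cst p.1 * FN N p.2.

(* Star-harmonic product of words, computed on reversed words
   (so that the last letter is the head). *)
Fixpoint shr (u : index) : index -> H1 :=
  match u with
  | [::] => fun v => [:: (1, v)]
  | a :: u' =>
      fix shr_v (v : index) : H1 :=
        match v with
        | [::] => [:: (1, a :: u')]
        | b :: v' =>
            map (fun p => (p.1, a :: p.2)) (shr u' (b :: v')) ++
            map (fun p => (p.1, b :: p.2)) (shr_v v') ++
            map (fun p => (- p.1, (a + b)%N :: p.2)) (shr u' v')
        end
  end.

Definition starw (w1 w2 : index) : H1 :=
  map (fun p => (p.1, rev p.2)) (shr (rev w1) (rev w2)).

Definition star (w1 w2 : H1) : H1 :=
  flatten (map (fun p => flatten (map (fun q =>
     map (fun c => (p.1 * q.1 * c.1, c.2)) (starw p.2 q.2)) w2)) w1).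

From HB Require Import structures.
From mathcomp Require Import all_boot all_order all_algebra fraction.
From mathcomp Require Import ring zify.
Set Implicit Arguments. Unset Strict Implicit. Unset Printing Implicit Defensive.
Import GRing.Theory.
Local Open Scope ring_scope.

(* Peeling off the largest summation variable n_r, according as r lies in A or
   not, writes F_N(k) as an iterated sum
     S(a :: k, M) = \sum_(1 <= j <= M) (f_j(a) S(k, j) + g_j(a) S(k, j - 1))
   over the reversed index, with f_j(a) = j^-a and g_j(a) = -(N - j + t)^-a.
   The product S(u, M) S(v, M) then obeys the star-harmonic recursion by
   induction on M, because f_j(a + b) = f_j(a) f_j(b) and
   g_j(a + b) = -g_j(a) g_j(b) account for the correction term -e_(a+b). *)

Lemma shr_cons a u b v : shr (a :: u) (b :: v) =
  [seq (p.1, a :: p.2) | p <- shr u (b :: v)] ++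
  [seq (p.1, b :: p.2) | p <- shr (a :: u) v] ++
  [seq (- p.1, (a + b)%N :: p.2) | p <- shr u v].
Proof. by []. Qed.

Section NestedSum.
Variables (R : comNzRingType) (phi : {rmorphism rat -> R}) (f g : nat -> nat -> R).

Fixpoint nested_sum (k : seq nat) (M : nat) : R :=
  if k is a :: k' then
    \sum_(1 <= j < M.+1) (f j a * nested_sum k' j + g j a * nested_sum k' j.-1)
  else 1.

Lemma nested_sum_cons0 a k : nested_sum (a :: k) 0 = 0.
Proof. by rewrite /= big_geq. Qed.

Lemma nested_sum_consS a k M : nested_sum (a :: k) M.+1 =
  nested_sum (a :: k) M + f M.+1 a * nested_sum k M.+1 + g M.+1 a * nested_sum k M.
Proof. by rewrite /= big_nat_recr //= addrA. Qed.

Definition nested_sum_lin (w : H1) (M : nat) : R :=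
  \sum_(p <- w) phi p.1 * nested_sum p.2 M.

Lemma nested_sum_lin_cat w1 w2 M :
  nested_sum_lin (w1 ++ w2) M = nested_sum_lin w1 M + nested_sum_lin w2 M.
Proof. by rewrite /nested_sum_lin big_cat. Qed.

Lemma nested_sum_lin_cons0 (c : rat * seq nat -> rat) a w :
  nested_sum_lin [seq (c p, a :: p.2) | p <- w] 0 = 0.
Proof.
by rewrite /nested_sum_lin big_map big1 // => p _; rewrite nested_sum_cons0 mulr0.
Qed.

Lemma nested_sum_lin_consS a w M :
  nested_sum_lin [seq (p.1, a :: p.2) | p <- w] M.+1 =
  nested_sum_lin [seq (p.1, a :: p.2) | p <- w] M
  + f M.+1 a * nested_sum_lin w M.+1 + g M.+1 a * nested_sum_lin w M.
Proof.
rewrite /nested_sum_lin !big_map !mulr_sumr -!big_split; apply: eq_bigr => p _.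
by rewrite nested_sum_consS /=; ring.
Qed.

Lemma nested_sum_lin_opp_consS a w M :
  nested_sum_lin [seq (- p.1, a :: p.2) | p <- w] M.+1 =
  nested_sum_lin [seq (- p.1, a :: p.2) | p <- w] M
  - f M.+1 a * nested_sum_lin w M.+1 - g M.+1 a * nested_sum_lin w M.
Proof.
rewrite /nested_sum_lin !big_map !mulr_sumr -!sumrN -!big_split.
by apply: eq_bigr => p _; rewrite nested_sum_consS rmorphN /=; ring.
Qed.

Lemma nested_sum_lin_single k M : nested_sum_lin [:: (1, k)] M = nested_sum k M.
Proof. by rewrite /nested_sum_lin big_seq1 rmorph1 mul1r. Qed.

Hypotheses (fD : forall j a b, f j (a + b) = f j a * f j b)
           (gD : forall j a b, g j (a + b) = - (g j a * g j b)).

Lemma nested_sum_shr M u v :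
  nested_sum u M * nested_sum v M = nested_sum_lin (shr u v) M.
Proof.
elim: M u v => [|M IHM] u v.
  case: u => [|a u]; first by rewrite nested_sum_lin_single mul1r.
  case: v => [|b v]; first by rewrite nested_sum_lin_single mulr1.
  by rewrite shr_cons !nested_sum_lin_cat !nested_sum_lin_cons0 !nested_sum_cons0; ring.
elim: u v => [|a u IHu] v; first by rewrite nested_sum_lin_single mul1r.
elim: v => [|b v IHv]; first by rewrite nested_sum_lin_single mulr1.
have IHM_ab := IHM (a :: u) (b :: v); rewrite shr_cons !nested_sum_lin_cat in IHM_ab.
rewrite shr_cons !nested_sum_lin_cat nested_sum_lin_consS nested_sum_lin_consS.
rewrite nested_sum_lin_opp_consS.
(* The terms with outermost variable at most M reassemble the product at M. *)
have -> : forall x1 x2 x3 y1 y2 y3 z1 z2 z3 : R,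
  x1 + x2 + x3 + (y1 + y2 + y3 + (z1 - z2 - z3)) =
  (x1 + (y1 + z1)) + x2 + x3 + y2 + y3 - z2 - z3 by move=> *; ring.
rewrite -IHM_ab -!IHu -IHv -!IHM fD gD !nested_sum_consS; ring.
Qed.

End NestedSum.

Section BoundedSum.
Variables (R : comNzRingType) (f g : nat -> nat -> R) (N : nat).

Definition last_leq r (n : {ffun 'I_r -> 'I_N}) (M : nat) : bool :=
  [forall i : 'I_r, (i.+1 == r)%N ==> (n i <= M)%N].

Definition weight r (kf : nat -> nat) (A : {set 'I_r}) (n : {ffun 'I_r -> 'I_N}) : R :=
  \prod_(i < r) (if i \in A then g (n i) (kf i) else f (n i) (kf i)).

Definition bounded_sum r (kf : nat -> nat) (M : nat) : R :=
  \sum_(A : {set 'I_r}) \sum_(n : {ffun 'I_r -> 'I_N} | Sbar A n && last_leq n M)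
    weight kf A n.

Definition snoc_set r (p : bool * {set 'I_r}) : {set 'I_r.+1} :=
  [set i | if unlift ord_max i is Some j then j \in p.2 else p.1].

Definition snoc_ffun r (p : 'I_N * {ffun 'I_r -> 'I_N}) : {ffun 'I_r.+1 -> 'I_N} :=
  [ffun i => if unlift ord_max i is Some j then p.2 j else p.1].

Lemma snoc_set_lift r b (A : {set 'I_r}) j :
  (lift ord_max j \in snoc_set (b, A)) = (j \in A).
Proof. by rewrite inE liftK. Qed.

Lemma snoc_set_max r b (A : {set 'I_r}) : (ord_max \in snoc_set (b, A)) = b.
Proof. by rewrite inE unlift_none. Qed.

Lemma snoc_ffun_lift r x (n : {ffun 'I_r -> 'I_N}) j :
  snoc_ffun (x, n) (lift ord_max j) = n j.
Proof. by rewrite ffunE liftK. Qed.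

Lemma snoc_ffun_max r x (n : {ffun 'I_r -> 'I_N}) : snoc_ffun (x, n) ord_max = x.
Proof. by rewrite ffunE unlift_none. Qed.

Lemma snoc_set_bij r : bijective (@snoc_set r).
Proof.
exists (fun A : {set 'I_r.+1} => (ord_max \in A, [set j : 'I_r | lift ord_max j \in A])).
  case=> b A; rewrite snoc_set_max; congr pair.
  by apply/setP => j; rewrite inE snoc_set_lift.
move=> A; apply/setP => i; rewrite inE.
by case: unliftP => [j ->|->]; rewrite ?liftK ?unlift_none ?inE.
Qed.

Lemma snoc_ffun_bij r : bijective (@snoc_ffun r).
Proof.
exists (fun n : {ffun 'I_r.+1 -> 'I_N} => (n ord_max, [ffun j : 'I_r => n (lift ord_max j)])).
  case=> x n; rewrite snoc_ffun_max; congr pair.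
  by apply/ffunP => j; rewrite ffunE snoc_ffun_lift.
move=> n; apply/ffunP => i; rewrite ffunE.
by case: unliftP => [j ->|->]; rewrite ?liftK ?unlift_none ?ffunE.
Qed.

Lemma last_leq_snoc r x (n : {ffun 'I_r -> 'I_N}) M :
  last_leq (snoc_ffun (x, n)) M = (x <= M)%N.
Proof.
apply/forallP/idP => [/(_ ord_max)|xM i]; first by rewrite snoc_ffun_max /= eqxx.
apply/implyP; case: (unliftP ord_max i) => [j ->|-> _]; last by rewrite snoc_ffun_max.
by rewrite lift_max /= eqSS => /eqP jr; have := ltn_ord j; rewrite jr ltnn.
Qed.

Lemma Sbar_snoc r b (A : {set 'I_r}) x (n : {ffun 'I_r -> 'I_N}) :
  Sbar (snoc_set (b, A)) (snoc_ffun (x, n)) =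
  [&& (0 < x)%N, Sbar A n & last_leq n (if b then x.-1 else x)].
Proof.
apply/idP/idP.
  case/andP=> /forallP pos /forallP chain.
  have x0 : (0 < x)%N by have := pos ord_max; rewrite snoc_ffun_max.
  rewrite x0 /=; apply/andP; split; first (apply/andP; split).
  - by apply/forallP => i; have := pos (lift ord_max i); rewrite snoc_ffun_lift.
  - apply/forallP => i; apply/forallP => j; apply/implyP => ji.
    have /forallP/(_ (lift ord_max j)) := chain (lift ord_max i).
    by rewrite !lift_max snoc_set_lift !snoc_ffun_lift ji.
  - apply/forallP => i; apply/implyP => /eqP ir.
    have /forallP/(_ ord_max) := chain (lift ord_max i).
    rewrite lift_max snoc_set_max snoc_ffun_lift snoc_ffun_max /= ir eqxx /=.
    by case: (b) => //; lia.
case/and3P=> x0 /andP[/forallP pos /forallP chain] /forallP lastn.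
apply/andP; split.
  apply/forallP => i; case: (unliftP ord_max i) => [j ->|->].
    by rewrite snoc_ffun_lift.
  by rewrite snoc_ffun_max.
apply/forallP => i; apply/forallP => j; apply/implyP => /eqP ji.
case: (unliftP ord_max i) ji => [i' ->|->] ji; last first.
  by have := ltn_ord j; rewrite ji /= ltnn.
case: (unliftP ord_max j) ji => [j' ->|->]; rewrite !lift_max => ji.
  have /forallP/(_ j') := chain i'.
  by rewrite snoc_set_lift !snoc_ffun_lift ji eqxx.
rewrite snoc_set_max snoc_ffun_lift snoc_ffun_max.
have := lastn i'; rewrite -ji eqxx /=.
by case: (b) => //; lia.
Qed.

Lemma weight_snoc r kf b (A : {set 'I_r}) x (n : {ffun 'I_r -> 'I_N}) :
  weight kf (snoc_set (b, A)) (snoc_ffun (x, n)) =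
  weight kf A n * (if b then g x (kf r) else f x (kf r)).
Proof.
rewrite /weight big_ord_recr /= snoc_set_max snoc_ffun_max; congr (_ * _).
apply: eq_bigr => i _.
have -> : widen_ord (leqnSn r) i = lift ord_max i by apply: val_inj; exact: esym (lift_max i).
by rewrite snoc_set_lift snoc_ffun_lift.
Qed.

Lemma sum_ord_bounded M (F : nat -> R) : (M < N)%N ->
  \sum_(x : 'I_N) (if (0 < x <= M)%N then F x else 0) = \sum_(1 <= j < M.+1) F j.
Proof.
move=> MN; rewrite -(big_mkord xpredT (fun x => if (0 < x <= M)%N then F x else 0)).
rewrite big_ltn; last exact: leq_ltn_trans MN.
rewrite /= add0r (big_nat_widen _ _ _ _ _ MN) [RHS]big_mkcond.
by apply: eq_big_nat => i /andP[-> _].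
Qed.

Lemma sum_pair (I J : finType) (F : I * J -> R) :
  \sum_(p : I * J) F p = \sum_(i : I) \sum_(j : J) F (i, j).
Proof. by rewrite pair_bigA; apply: eq_bigr => -[]. Qed.

Lemma bounded_sum0 kf M : bounded_sum 0 kf M = 1.
Proof.
rewrite /bounded_sum (big_pred1 set0); last by move=> A; apply/esym/eqP/setP => -[].
rewrite (big_pred1 (ffun0 (card_ord 0))) ?/weight ?big_ord0 // => n /=.
have -> : n == ffun0 (card_ord 0) by apply/eqP/ffunP => -[].
by apply/andP; split; [apply/andP; split|]; apply/forallP => -[].
Qed.

Lemma bounded_sum_snoc r kf M : (M < N)%N ->
  bounded_sum r.+1 kf M = \sum_(1 <= j < M.+1)
    (f j (kf r) * bounded_sum r kf j + g j (kf r) * bounded_sum r kf j.-1).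
Proof.
move=> MN; rewrite -sum_ord_bounded //.
rewrite /bounded_sum (reindex (@snoc_set r)) /=; last exact: onW_bij (snoc_set_bij r).
rewrite sum_pair big_bool /=.
have split_last b (A : {set 'I_r}) :
  \sum_(n | Sbar (snoc_set (b, A)) n && last_leq n M) weight kf (snoc_set (b, A)) n =
  \sum_(x : 'I_N) (if (0 < x <= M)%N then
     (if b then g x (kf r) else f x (kf r)) *
     \sum_(n | Sbar A n && last_leq n (if b then x.-1 else x)) weight kf A n else 0).
  rewrite (reindex (@snoc_ffun r)) /=; last exact: onW_bij (snoc_ffun_bij r).
  rewrite big_mkcond sum_pair; apply: eq_bigr => x _.
  case: (boolP (0 < x <= M)%N) => [/andP[x0 xM]|xM]; last first.
    by apply: big1 => n _; rewrite Sbar_snoc last_leq_snoc -andbA andbCA (negbTE xM) andbF.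
  rewrite mulr_sumr [RHS]big_mkcond; apply: eq_bigr => n _.
  by rewrite Sbar_snoc last_leq_snoc weight_snoc x0 xM andbT mulrC.
under eq_bigr do rewrite split_last.
under [X in _ + X]eq_bigr do rewrite split_last.
rewrite exchange_big [X in _ + X]exchange_big /= -big_split /=.
apply: eq_bigr => x _; case: ifP => _; last by rewrite !big1 ?addr0.
by rewrite -!mulr_sumr addrC.
Qed.

Lemma nested_sum_bounded r kf M : (M < N)%N ->
  nested_sum f g (rev (mkseq kf r)) M = bounded_sum r kf M.
Proof.
elim: r M => [|r IH] M MN; first by rewrite bounded_sum0.
rewrite mkseqS rev_rcons bounded_sum_snoc //=.
apply: eq_big_nat => j /andP[_ jM].
by rewrite !IH // (leq_ltn_trans _ MN) // (leq_trans (leq_pred j)).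
Qed.

End BoundedSum.

Definition recip_pow (j a : nat) : QT := ((j%:R : QT) ^+ a)^-1.
Definition neg_recip_shift (N j a : nat) : QT := - ((((N - j)%:R : QT) + tt_) ^+ a)^-1.

Lemma recip_powD j a b : recip_pow j (a + b) = recip_pow j a * recip_pow j b.
Proof. by rewrite /recip_pow exprD invfM. Qed.

Lemma neg_recip_shiftD N j a b :
  neg_recip_shift N j (a + b) = - (neg_recip_shift N j a * neg_recip_shift N j b).
Proof. by rewrite /neg_recip_shift exprD invfM mulrNN. Qed.

Lemma FN_bounded_sum N k : (0 < N)%N ->
  FN N k = bounded_sum recip_pow (neg_recip_shift N) N (size k) (nth 0%N k) N.-1.
Proof.
move=> N0; rewrite /FN /bounded_sum; apply: eq_bigr => A _.
rewrite mulr_sumr; apply: eq_big => [n|n _].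
  rewrite -[LHS]andbT; congr andb; apply/esym/forallP => i.
  by apply/implyP => _; rewrite -ltnS prednK.
rewrite mulrA -prodrN /weight [RHS](bigID (mem A)) /=.
by congr (_ * _); apply: eq_bigr => i; [move=> -> | move=> /negbTE ->].
Qed.

Lemma FN_nested_sum N k : (0 < N)%N ->
  FN N k = nested_sum recip_pow (neg_recip_shift N) (rev k) N.-1.
Proof.
by move=> N0; rewrite FN_bounded_sum // -nested_sum_bounded ?mkseq_nth ?prednK.
Qed.

HB.instance Definition _ :=
  GRing.RMorphism.copy cst (@FracField.tofrac {poly rat} \o polyC).

Lemma FN_starw N u v : (0 < N)%N ->
  \sum_(c <- starw u v) cst c.1 * FN N c.2 = FN N u * FN N v.
Proof.
move=> N0; rewrite !FN_nested_sum // (nested_sum_shr cst (@recip_powD) (@neg_recip_shiftD N)).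
by rewrite /starw big_map; apply: eq_bigr => c _; rewrite FN_nested_sum // revK.
Qed.

Theorem mainTheorem14 (N : nat) (w1 w2 : H1) :
  (0 < N)%N -> admissible w1 -> admissible w2 ->
  FNlin N w1 * FNlin N w2 = FNlin N (star w1 w2).
Proof.
move=> N0 _ _.
rewrite /FNlin /star big_flatten big_map big_distrl; apply: eq_bigr => p _.
rewrite big_flatten big_map big_distrr; apply: eq_bigr => q _.
rewrite big_map /=; under eq_bigr do rewrite !rmorphM -!mulrA.
by rewrite -!mulr_sumr FN_starw //; ring.
Qed.
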